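(* Let $k\ge1$ be an integer, $r>0$, $\alpha,\beta>0$, and let $(X,\rho)$ be a finite semimetric space with the counting measure $\mu(A)=|A|$ such that $$T_{k+1}(X)\le \frac{\beta|X|^{k+1}}{(k+1)!}\qquad\text{and}\qquad T_k(X)\ge \frac{\alpha|X|^k}{k!}.$$ Let $X=\bigsqcup_{i=1}^n Z_i$ be any greedy cluster partition of $X$ with associated sets $X_i\subseteq Z_i$, and let $I_1=\{i\in\{1,\dots,n\}: (k+1)|X_i|\le |Z_i|\}$. Then $$\sum_{i\in I_1}|Z_i|\le \frac{(k+1)\beta}{\alpha}|X|.$$
   Context: A finite semimetric space $(X,\rho)$: $\rho$ is a nonnegative symmetric function on $X\times X$ with $\rho(x,x)=0$ satisfying the triangle inequality, where distinct points may be at distance $0$. A $2r$-cluster is a subset of diameter at most $2r$. For $x\in X$ and nonempty $A\subseteq X$, $\rho(x,A)=\min_{a\in A}\rho(x,a)$. For an integer $m\ge1$, $T_m(X)=\frac{1}{m!}\,\#\{(x_1,\dots,x_m)\in X^m:\rho(x_i,x_j)>r \text{ for all } 1\le i<j\le m\}$. Greedy cluster partition: let $X_1$ be a $2r$-cluster of maximal cardinality in $X$ (any one, if several) and $Z_1=\{x\in X:\rho(x,X_1)<r\}$. Given pairwise disjoint $Z_1,\dots,Z_m$ with $R_m=X\setminus\bigcup_{i\le m}Z_i\neq\emptyset$, let $X_{m+1}$ be a $2r$-cluster of maximal cardinality among subsets of $R_m$, and $Z_{m+1}=\{x\in R_m:\rho(x,X_{m+1})<r\}$. The procedure stops when the $Z_i$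 cover $X$, giving $X=\bigsqcup_{i=1}^n Z_i$. *)

From HB Require Import structures.
From mathcomp Require Import all_boot all_order all_algebra.
Set Implicit Arguments. Unset Strict Implicit. Unset Printing Implicit Defensive.
Import Order.TTheory GRing.Theory Num.Theory.
Local Open Scope ring_scope.

Section Defs.
Variables (R : realFieldType) (X : finType) (rho : X -> X -> R).

Definition semimetric : Prop :=
  [/\ forall x y, 0 <= rho x y,
      forall x y, rho x y = rho y x,
      forall x, rho x x = 0
    & forall x y z, rho x z <= rho x y + rho y z].

Definition cluster2r (r : R) (A : {set X}) : bool :=
  [forall a in A, forall b in A, rho a b <= 2 * r].

Definition Tm (r : R) (m : nat) : R :=
  (#|[set f : {ffun 'I_m -> X} |
       [forall i : 'I_m, forall j : 'I_m, (i < j)%N ==> (r < rho (f i) (f j))]]|)%:R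
  / (m`!)%:R.

Definition rest (Zs : nat -> {set X}) (i : nat) : {set X} :=
  ~: (\bigcup_(j < i) Zs j).

(* One greedy step inside the remaining set Rm: Xi is a 2r-cluster of maximal
   cardinality among subsets of Rm, and Zi = {x in Rm : rho(x, Xi) < r}
   (rho(x,Xi) < r iff some a in Xi has rho x a < r, Xi being nonempty). *)
Definition greedy_step (r : R) (Rm Xi Zi : {set X}) : Prop :=
  [/\ Xi \subset Rm, cluster2r r Xi,
      (forall Y : {set X}, Y \subset Rm -> cluster2r r Y -> #|Y| <= #|Xi|)%N
    & Zi = [set x in Rm | [exists a in Xi, rho x a < r]]].

(* (Xs i, Zs i)_{i < n} is a greedy cluster partition of X (0-indexed). *)
Definition greedy_partition (r : R) (n : nat) (Xs Zs : nat -> {set X}) : Prop :=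
  (forall i, (i < n)%N ->
     rest Zs i != set0 /\ greedy_step r (rest Zs i) (Xs i) (Zs i))
  /\ rest Zs n = set0.

End Defs.

From HB Require Import structures.
From mathcomp Require Import all_boot all_order all_algebra.
From mathcomp Require Import zify ring.
Set Implicit Arguments. Unset Strict Implicit. Unset Printing Implicit Defensive.
Import Order.TTheory GRing.Theory Num.Theory.
Local Open Scope ring_scope.

(* Let S be the left-hand side, A_m the set of r-separated m-tuples (so that
   |A_m| = m! T_m), and, for a k-tuple f, far f the set of points at distance
   > r from every f j.  Each closed r-ball inside the remaining set R_{i-1} is
   a 2r-cluster, so by maximality of X_i it meets Z_i in at most |X_i| points.
   Hence for i in I_1 at most k |X_i| <= k/(k+1) |Z_i| points of Z_i lie
   within r of some f j, and as the Z_i are disjoint, S <= (k+1) |far f|.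
   Appending a point of far f to f in A_k gives an element of A_{k+1}, so
   summing over f in A_k yields S |A_k| <= (k+1) |A_{k+1}|; the hypotheses
   on T_k and T_{k+1} turn this into the bound. *)

Lemma leq_card_bigcup (T I : finType) (P : pred I) (F : I -> {set T}) :
  (#|\bigcup_(i | P i) F i| <= \sum_(i | P i) #|F i|)%N.
Proof.
elim/big_rec2: _ => [|i s U _ leUs]; first by rewrite cards0.
by rewrite (leq_trans (leq_card_setU _ U).1) ?leq_add2l.
Qed.

Lemma card_bigcup_ord_disjoint (T : finType) (F : nat -> {set T}) (m : nat) :
  (forall i j, (i < j < m)%N -> [disjoint F i & F j]) ->
  #|\bigcup_(i < m) F i| = (\sum_(i < m) #|F i|)%N.
Proof.
elim: m => [|m IHm] dF; first by rewrite !big_ord0 cards0.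
rewrite !big_ord_recr /= -IHm; last first.
  by move=> i j /andP[ij jm]; apply: dF; rewrite ij ltnW.
apply/eqP; rewrite (leq_card_setU _ _).2 disjoint_sym.
by apply: bigcup_disjoint => i _; rewrite disjoint_sym dF // ltn_ord /=.
Qed.

Section GreedyPartition.
Variables (R : realFieldType) (X : finType) (rho : X -> X -> R) (r : R).

Definition far (I : finType) (f : I -> X) : {set X} :=
  [set y | [forall j, r < rho (f j) y]].

Definition sep_tuples (m : nat) : {set {ffun 'I_m -> X}} :=
  [set f : {ffun 'I_m -> X} |
     [forall i : 'I_m, forall j : 'I_m, (i < j)%N ==> (r < rho (f i) (f j))]].

Lemma Tm_sep_tuples m : Tm rho r m = #|sep_tuples m|%:R / (m`!)%:R.
Proof. by []. Qed.

Definition ffun_rcons m (f : {ffun 'I_m -> X}) (y : X) : {ffun 'I_m.+1 -> X} :=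
  [ffun i => if unlift ord_max i is Some j then f j else y].

Lemma ffun_rcons_inj m :
  injective (fun p : {ffun 'I_m -> X} * X => ffun_rcons p.1 p.2).
Proof.
move=> [f y] [f' y'] /= /ffunP eq_ff'.
have := eq_ff' ord_max; rewrite !ffunE unlift_none => ->.
congr pair; apply/ffunP => j.
by have := eq_ff' (lift ord_max j); rewrite !ffunE liftK.
Qed.

Lemma ffun_rcons_sep_tuples m f y :
  f \in sep_tuples m -> y \in far f -> ffun_rcons f y \in sep_tuples m.+1.
Proof.
rewrite !inE => /forallP sep_f /forallP far_y.
apply/forallP => i; apply/forallP => j; apply/implyP; rewrite !ffunE.
case: unliftP => [i'|] -> ; case: unliftP => [j'|] -> //.
- by rewrite !lift_max; apply: (implyP (forallP (sep_f i') j')).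
- by rewrite lift_max ltnNge (ltnW (ltn_ord j')).
- by rewrite ltnn.
Qed.

Lemma sum_card_far_sep_tuples m :
  (\sum_(f in sep_tuples m) #|far f| <= #|sep_tuples m.+1|)%N.
Proof.
pose P := [set p : {ffun 'I_m -> X} * X |
             (p.1 \in sep_tuples m) && (p.2 \in far p.1)].
have -> : (\sum_(f in sep_tuples m) #|far f|)%N = #|P|.
  rewrite -sum1_card; under eq_bigr do rewrite -sum1_card.
  by rewrite pair_big_dep; apply: eq_bigl => p; rewrite !inE.
rewrite -(card_imset _ (@ffun_rcons_inj m)).
apply/subset_leq_card/subsetP => _ /imsetP[[f y] + ->].
by rewrite inE => /andP[]; apply: ffun_rcons_sep_tuples.
Qed.

Lemma cluster2r_ball (A : {set X}) x :
  semimetric rho -> cluster2r rho r [set y in A | rho x y <= r].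
Proof.
case=> _ rhoC _ rho_tri.
apply/forallP => a; apply/implyP; rewrite inE => /andP[_ xa].
apply/forallP => b; apply/implyP; rewrite inE => /andP[_ xb].
by rewrite (le_trans (rho_tri a x b)) // rhoC mulr2n mulrDl mul1r lerD.
Qed.

Lemma greedy_step_card_ball (Rm Xi Zi : {set X}) x :
  semimetric rho -> greedy_step rho r Rm Xi Zi ->
  (#|[set y in Zi | (rho x y <= r)%R]| <= #|Xi|)%N.
Proof.
move=> rhoS [_ _ Xi_max ->].
apply: leq_trans (Xi_max _ _ (cluster2r_ball Rm x rhoS)); last first.
  by apply/subsetP => y; rewrite inE => /andP[].
apply/subset_leq_card/subsetP => y.
by rewrite !inE => /andP[/andP[-> _] ->].
Qed.

Lemma greedy_step_card_far (Rm Xi Zi : {set X}) (I : finType) (f : I -> X) :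
  semimetric rho -> greedy_step rho r Rm Xi Zi ->
  (#|I|.+1 * #|Xi| <= #|Zi|)%N ->
  (#|Zi| <= #|I|.+1 * #|Zi :&: far f|)%N.
Proof.
move=> rhoS step Zi_large.
have near_le : (#|Zi :\: far f| <= #|I| * #|Xi|)%N.
  pose near_f j := [set y in Zi | (rho (f j) y <= r)%R].
  apply: leq_trans (_ : #|\bigcup_j near_f j| <= _)%N.
    apply/subset_leq_card/subsetP => y; rewrite !inE negb_forall.
    case/andP=> /existsP[j fjy] Ziy; apply/bigcupP; exists j => //.
    by rewrite inE Ziy leNgt.
  apply: leq_trans (leq_card_bigcup _ _) _.
  rewrite -sum_nat_const; apply: leq_sum => j _.
  exact: greedy_step_card_ball step.
have := cardsID (far f) Zi; rewrite setIC.
have : (#|I|.+1 * (#|I| * #|Xi|) <= #|I| * #|Zi|)%N.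
  by rewrite mulnCA leq_mul2l Zi_large orbT.
nia.
Qed.

Variables (n : nat) (Xs Zs : nat -> {set X}).
Hypothesis greedy : greedy_partition rho r n Xs Zs.

Lemma greedy_disjoint i j : (i < j < n)%N -> [disjoint Zs i & Zs j].
Proof.
case/andP=> ij jn; have [_ _ _ defZj] := (greedy.1 j jn).2.
rewrite disjoint_sym defZj disjoints_subset; apply/subsetP => y.
rewrite !inE => /andP[/bigcupP notZy _]; apply/negP => Ziy.
by apply: notZy; exists (Ordinal ij).
Qed.

Lemma greedy_sum_cardI (G : {set X}) :
  (\sum_(i < n) #|Zs i :&: G| <= #|G|)%N.
Proof.
rewrite -(card_bigcup_ord_disjoint (F := fun i => Zs i :&: G)).
  by apply/subset_leq_card/bigcupsP => i _; apply: subsetIr.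
move=> i j ijn /=; apply: disjointWl (subsetIl _ _) _.
exact: disjointWr (subsetIl _ _) (greedy_disjoint ijn).
Qed.

Lemma greedy_sum_I1_card_far (I : finType) (f : I -> X) :
  semimetric rho ->
  (\sum_(i < n | #|I|.+1 * #|Xs i| <= #|Zs i|) #|Zs i|
     <= #|I|.+1 * #|far f|)%N.
Proof.
move=> rhoS.
apply: leq_trans (_ : \sum_(i < n) #|I|.+1 * #|Zs i :&: far f| <= _)%N.
  rewrite [leqRHS](bigID (fun i : 'I_n => #|I|.+1 * #|Xs i| <= #|Zs i|))%N.
  apply: leq_trans (leq_addr _ _); apply: leq_sum => i Zi_large.
  exact: greedy_step_card_far (greedy.1 i (ltn_ord i)).2 Zi_large.
by rewrite -big_distrr leq_mul2l greedy_sum_cardI orbT.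
Qed.

Lemma greedy_sum_I1_mul_card_sep k :
  semimetric rho ->
  ((\sum_(i < n | k.+1 * #|Xs i| <= #|Zs i|) #|Zs i|) * #|sep_tuples k|
     <= k.+1 * #|sep_tuples k.+1|)%N.
Proof.
move=> rhoS; rewrite mulnC -sum_nat_const.
apply: leq_trans (_ : \sum_(f in sep_tuples k) k.+1 * #|far f| <= _)%N.
  apply: leq_sum => f _.
  by have := greedy_sum_I1_card_far f rhoS; rewrite card_ord.
by rewrite -big_distrr leq_mul2l sum_card_far_sep_tuples orbT.
Qed.

End GreedyPartition.

Theorem mainTheorem2 (R : realFieldType) (X : finType) (rho : X -> X -> R)
  (k : nat) (r alpha beta : R) (n : nat) (Xs Zs : nat -> {set X}) :
  (1 <= k)%N -> 0 < r -> 0 < alpha -> 0 < beta ->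
  semimetric rho ->
  Tm rho r k.+1 <= beta * (#|X|%:R ^+ k.+1) / (k.+1)`!%:R ->
  alpha * (#|X|%:R ^+ k) / (k`!)%:R <= Tm rho r k ->
  greedy_partition rho r n Xs Zs ->
  (\sum_(i < n | (k.+1 * #|Xs i| <= #|Zs i|)%N) #|Zs i|)%:R
    <= k.+1%:R * beta / alpha * #|X|%:R.
Proof.
move=> _ _ alpha_gt0 _ rhoS Tk1_le Tk_ge greedy.
rewrite Tm_sep_tuples ler_pM2r ?invr_gt0 ?ltr0n ?fact_gt0 // in Tk1_le.
rewrite Tm_sep_tuples ler_pM2r ?invr_gt0 ?ltr0n ?fact_gt0 // in Tk_ge.
have := greedy_sum_I1_mul_card_sep greedy k rhoS.
set S := (\sum_(i < n | _) _)%N; rewrite -(ler_nat R) !natrM => S_le.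
have [X_empty | X_gt0] := posnP #|X|.
  suff -> : S = 0%N by rewrite X_empty !mulr0.
  by apply: big1 => i _; apply/eqP; rewrite -leqn0 -X_empty max_card.
set N := #|X|%:R; have N_gt0 : 0 < N by rewrite ltr0n.
rewrite -(ler_pM2r (mulr_gt0 alpha_gt0 (exprn_gt0 k N_gt0))).
have -> : k.+1%:R * beta / alpha * N * (alpha * N ^+ k)
          = k.+1%:R * (beta * N ^+ k.+1).
  by rewrite exprS; field; rewrite gt_eqF.
apply: le_trans (ler_wpM2l (ler0n _ _) Tk_ge) _.
exact: le_trans S_le (ler_wpM2l (ler0n _ _) Tk1_le).
Qed.
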